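(* Let $V$ be a finite ground set partitioned into groups $V_1,\dots,V_m$, let $\alpha$ be a nonnegative integer and $c$ a positive integer, and let $f:2^V\to\mathbb{R}_{\ge0}$ be submodular (not necessarily monotone). Let $OPT$ be an optimal solution of Problem P.2: maximize $f(S)$ over $S\subseteq V$ subject to $|S\cap V_i|-|S\cap V_j|\le\alpha$ for all $i,j\in[m]$ and $|S|\le c$. Assume $\min_{i\in[m]}|OPT\cap V_i|>1$, and let $z=\min_{i\in[m]}\lfloor|OPT\cap V_i|/2\rfloor$. Then the output $A^{\mathsf{final}}$ of the two-phase algorithm described in the context satisfies $$\mathbb{E}[f(A^{\mathsf{final}})]\ge\frac{1/e-o(1)}{8}\cdot f(OPT).$$
   Context: Problem P.2.2 (depending on $z$): maximize $f(S)$ over $S\subseteq V$ subject to $|S\cap V_i|\le z+\alpha$ for all $i$ and $\sum_{i\in[m]}\max\{z,|S\cap V_i|\}\le c$. Its feasible sets form a matroid. Algorithm: Phase 1: compute a random feasible solution $A^{P22}$ of P.2.2 using the randomized algorithm of Feldman, Naor and Schwartz (2011) for (non-monotone) submodular maximization under a matroid constraint, which guarantees $\mathbb{E}[f(A^{P22})]\ge(1/e-o(1))\,f(S^{P22})$ where $S^{P22}$ is an optimal solution of P.2.2. Phase 2: let $L=\{i\in[m]:|A^{P22}\cap V_i|<z\}$; for each $i\in L$ pick arbitrary disjoint $X_i,Y_i\subseteq V_i\setminus A^{P22}$ with $|X_i|=|Y_i|=z-|A^{P22}\cap V_i|$; let $A^1=A^{P22}\cup\bigcup_{i\in L}X_i$,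 $A^2=A^{P22}\cup\bigcup_{i\in L}Y_i$, and output $A^{\mathsf{final}}$, the one of $A^1,A^2$ with larger $f$-value. The expectation is over the randomness of Phase 1. *)

From HB Require Import structures.
From mathcomp Require Import all_boot all_order all_algebra.
From mathcomp Require Import all_classical all_reals all_analysis.
Set Implicit Arguments. Unset Strict Implicit. Unset Printing Implicit Defensive.
Import Order.TTheory GRing.Theory Num.Theory.
Local Open Scope ring_scope.

Section Defs.
Variables (R : realType) (V : finType) (m : nat) (grp : V -> 'I_m).

Definition part (i : 'I_m) : {set V} := [set v | grp v == i].

Definition submodular (f : {set V} -> R) : Prop :=
  forall A B : {set V}, f (A :|: B) + f (A :&: B) <= f A + f B.

Definition nonneg_fun (f : {set V} -> R) : Prop := forall A, 0 <= f A.

Definition feasibleP2 (alpha c : nat) (S : {set V}) : Prop :=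
  (forall i j : 'I_m, (#|S :&: part i| <= #|S :&: part j| + alpha)%N) /\
  (#|S| <= c)%N.

Definition feasibleP22 (z alpha c : nat) (S : {set V}) : Prop :=
  (forall i : 'I_m, (#|S :&: part i| <= z + alpha)%N) /\
  (\sum_(i < m) maxn z #|S :&: part i| <= c)%N.

Definition is_optimal (feas : {set V} -> Prop) (f : {set V} -> R) (S : {set V}) : Prop :=
  feas S /\ forall T, feas T -> f T <= f S.

(* z = min_i floor(|OPT ∩ V_i| / 2)  (#|V| is a neutral upper bound, m > 0) *)
Definition zOf (OPT : {set V}) : nat :=
  \big[minn/#|V|]_(i < m) (#|OPT :&: part i| %/ 2)%N.

Definition Lset (z : nat) (A : {set V}) : {set 'I_m} :=
  [set i | (#|A :&: part i| < z)%N].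

Definition phase2_ok (z : nat) (A : {set V}) (X Y : 'I_m -> {set V}) : Prop :=
  forall i, i \in Lset z A ->
    [/\ X i \subset part i :\: A, Y i \subset part i :\: A,
        [disjoint X i & Y i],
        #|X i| = (z - #|A :&: part i|)%N & #|Y i| = (z - #|A :&: part i|)%N].

Definition augment (z : nat) (A : {set V}) (X : 'I_m -> {set V}) : {set V} :=
  A :|: \bigcup_(i in Lset z A) X i.

Definition Afinal (f : {set V} -> R) (z : nat) (A : {set V}) (X Y : 'I_m -> {set V}) :
  {set V} :=
  let A1 := augment z A X in let A2 := augment z A Y in
  if f A2 <= f A1 then A1 else A2.

End Defs.

Definition expect (R : realType) (Omega : finType) (p : Omega -> R) (X : Omega -> R) : R :=
  \sum_(w : Omega) p w * X w.

Definition is_distribution (R : realType) (Omega : finType) (p : Omega -> R) : Prop :=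
  (forall w, 0 <= p w) /\ \sum_(w : Omega) p w = 1.

(* Every group of OPT has at most 2z + 1 + alpha <= 3 (z + alpha) elements, so
   OPT is the union of three subsets that keep at most z + alpha elements per
   group; since z <= |OPT ∩ V_i| and |OPT| <= c they are feasible for P.2.2, and
   subadditivity gives f(OPT) <= 3 f(S^P22).  In Phase 2 the sets X_i and Y_i are
   disjoint, so A^1 ∩ A^2 = A^P22 and submodularity with nonnegativity gives
   f(A^P22) <= f(A^1) + f(A^2) <= 2 f(A^final).  Taking expectations yields the
   ratio (1/e - eps)/6, which is better than the claimed (1/e - eps)/8. *)

From HB Require Import structures.
From mathcomp Require Import all_boot all_order all_algebra.
From mathcomp Require Import all_classical all_reals all_analysis.
(* Restore the finset and fintype names shadowed by classical_sets. *)
From mathcomp Require Import fintype finset.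
From mathcomp Require Import zify lra.
Set Implicit Arguments. Unset Strict Implicit. Unset Printing Implicit Defensive.
Import Order.TTheory GRing.Theory Num.Theory.
Local Open Scope ring_scope.

Section SubmodularFunctions.
Variables (R : realType) (V : finType) (f : {set V} -> R).
Hypotheses (f_ge0 : nonneg_fun f) (f_sub : submodular f).

Lemma submodular_subadditive (A B : {set V}) : f (A :|: B) <= f A + f B.
Proof. by have := f_sub A B; have := f_ge0 (A :&: B); lra. Qed.

Lemma submodular_setI_le (A B : {set V}) : f (A :&: B) <= f A + f B.
Proof. by have := f_sub A B; have := f_ge0 (A :|: B); lra. Qed.

End SubmodularFunctions.

Lemma cardsDI (T : finType) (A B C : {set T}) : B \subset A ->
  #|(A :\: B) :&: C| = (#|A :&: C| - #|B :&: C|)%N.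
Proof. by move=> sBA; rewrite setIDAC cardsD setIAC (setIidPr sBA). Qed.

Section Groups.
Variables (V : finType) (m : nat) (grp : V -> 'I_m).

Lemma card_sum_part (S : {set V}) : #|S| = (\sum_(i < m) #|S :&: part grp i|)%N.
Proof.
rewrite -sum1_card (partition_big grp predT) //=.
by apply: eq_bigr => i _; rewrite -sum1_card; apply: eq_bigl => x; rewrite !inE.
Qed.

Definition group_cap (k : nat) (B : {set V}) : {set V} :=
  [set x in B | (index x (enum (B :&: part grp (grp x))) < k)%N].

Lemma group_cap_sub k B : group_cap k B \subset B.
Proof. by apply/subsetP => x; rewrite inE => /andP[]. Qed.

Lemma group_capI k B i :
  group_cap k B :&: part grp i = [set x in take k (enum (B :&: part grp i))].
Proof.
apply/setP => x; rewrite !inE.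
have [xBi|xBi] := boolP (x \in B :&: part grp i).
  move: (xBi); rewrite !inE => /andP[xB /eqP gx].
  by rewrite in_take ?mem_enum // -gx xB eqxx andbT.
rewrite (negbTE (contra (@mem_take _ _ _ _) _)) ?mem_enum //.
by apply: contraNF xBi => /andP[/andP[xB _] gx]; rewrite !inE xB.
Qed.

Lemma card_group_capI k B i :
  #|group_cap k B :&: part grp i| = minn k #|B :&: part grp i|.
Proof.
rewrite group_capI cardsE (card_uniqP _) ?take_uniq ?enum_uniq //.
by rewrite size_take_min -cardE.
Qed.

Lemma le_three_group_caps (R : realType) (f : {set V} -> R)
    (S : {set V}) (k : nat) (M : R) :
  (forall A B, f (A :|: B) <= f A + f B) ->
  (forall i : 'I_m, #|S :&: part grp i| <= 3 * k)%N ->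
  (forall T : {set V}, T \subset S ->
     (forall i, #|T :&: part grp i| <= k)%N -> f T <= M) ->
  f S <= 3 * M.
Proof.
move=> f_subadd S_small f_capped.
pose T1 := group_cap k S; pose S' := S :\: T1.
pose T2 := group_cap k S'; pose T3 := S' :\: T2.
have sT1 : T1 \subset S := group_cap_sub k S.
have sS' : S' \subset S := subsetDl S T1.
have sT2 : T2 \subset S' := group_cap_sub k S'.
have fT1 : f T1 <= M by apply: f_capped => // i; rewrite card_group_capI geq_minl.
have fT2 : f T2 <= M.
  by apply: f_capped => [|i]; [exact: subset_trans sS'|rewrite card_group_capI geq_minl].
have fT3 : f T3 <= M.
  apply: f_capped => [|i]; first exact: subset_trans (subsetDl _ _) sS'.
  rewrite cardsDI // card_group_capI cardsDI // card_group_capI.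
  by have := S_small i; lia.
have fS : f S <= f T1 + f S' by rewrite -{1}(setID S T1) (setIidPr sT1).
have fS' : f S' <= f T2 + f T3 by rewrite -{1}(setID S' T2) (setIidPr sT2).
lra.
Qed.

Lemma feasibleP22_sub (z alpha c : nat) (S T : {set V}) :
  T \subset S -> (#|S| <= c)%N -> (forall i, z <= #|S :&: part grp i|)%N ->
  (forall i, #|T :&: part grp i| <= z + alpha)%N -> feasibleP22 grp z alpha c T.
Proof.
move=> sTS S_le_c z_le T_capped; split=> //; apply: leq_trans S_le_c.
rewrite card_sum_part leq_sum // => i _; rewrite geq_max z_le.
by rewrite subset_leq_card // setSI.
Qed.

Lemma zOf_le_half (OPT : {set V}) i : (zOf grp OPT <= #|OPT :&: part grp i| %/ 2)%N.
Proof. by rewrite /zOf -minEnat -leEnat bigmin_le. Qed.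

Lemma zOf_attained (OPT : {set V}) :
  (0 < m)%N -> exists j, zOf grp OPT = (#|OPT :&: part grp j| %/ 2)%N.
Proof.
move=> m_gt0; rewrite /zOf -minEnat.
have F_le i : predT i -> ((#|OPT :&: part grp i| %/ 2)%N <= #|V|)%O.
  by move=> _; rewrite leEnat (leq_trans (leq_div _ _)) ?max_card.
by have [j _ ->] := eq_bigmin (Ordinal m_gt0) predT _ isT F_le; exists j.
Qed.

Lemma card_optP2_part_le (alpha c : nat) (OPT : {set V}) i :
  (0 < m)%N -> feasibleP2 grp alpha c OPT ->
  (forall j, 1 < #|OPT :&: part grp j|)%N ->
  (#|OPT :&: part grp i| <= 3 * (zOf grp OPT + alpha))%N.
Proof.
move=> m_gt0 [balanced _] OPT_gt1; have [j ->] := zOf_attained OPT m_gt0.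
by have := balanced i j; have := OPT_gt1 j; lia.
Qed.

Lemma optP2_le_3_optP22 (R : realType) (f : {set V} -> R) (alpha c : nat)
    (OPT S22 : {set V}) :
  (0 < m)%N -> nonneg_fun f -> submodular f ->
  is_optimal (feasibleP2 grp alpha c) f OPT ->
  (forall i, 1 < #|OPT :&: part grp i|)%N ->
  is_optimal (feasibleP22 grp (zOf grp OPT) alpha c) f S22 ->
  f OPT <= 3 * f S22.
Proof.
move=> m_gt0 f_ge0 f_sub [OPT_feas _] OPT_gt1 [_ S22_max].
apply: (le_three_group_caps (k := zOf grp OPT + alpha)) => [|i|T sT T_capped].
- exact: submodular_subadditive.
- exact: card_optP2_part_le m_gt0 OPT_feas OPT_gt1.
- apply/S22_max/(feasibleP22_sub sT OPT_feas.2 _ T_capped) => i.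
  exact: leq_trans (zOf_le_half OPT i) (leq_div _ _).
Qed.

Lemma augmentI (z : nat) (A : {set V}) (X Y : 'I_m -> {set V}) :
  phase2_ok grp z A X Y -> augment grp z A X :&: augment grp z A Y = A.
Proof.
move=> XY_ok; apply/setP => x; rewrite !inE.
have [//|xA /=] := boolP (x \in A).
apply/negP => /andP[/bigcupP[i iL xXi] /bigcupP[j jL xYj]].
have [sXi _ dXY _ _] := XY_ok i iL; have [_ sYj _ _ _] := XY_ok j jL.
move: (subsetP sXi x xXi) (subsetP sYj x xYj).
rewrite !inE => /andP[_ /eqP gi] /andP[_ /eqP gj].
by move: xYj; rewrite -gj gi (disjointFr dXY xXi).
Qed.

Lemma Afinal_ge_half (R : realType) (f : {set V} -> R) (z : nat) (A : {set V})
    (X Y : 'I_m -> {set V}) :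
  nonneg_fun f -> submodular f -> phase2_ok grp z A X Y ->
  f A <= 2 * f (Afinal grp f z A X Y).
Proof.
move=> f_ge0 f_sub XY_ok; rewrite /Afinal.
have := submodular_setI_le f_ge0 f_sub (augment grp z A X) (augment grp z A Y).
by rewrite augmentI //; case: ifP => [|/negbT]; rewrite -?ltNge; lra.
Qed.

End Groups.

Section Expectation.
Variables (R : realType) (Omega : finType) (p : Omega -> R).
Hypothesis p_ge0 : forall w, 0 <= p w.

Lemma ler_expect (X Y : Omega -> R) :
  (forall w, X w <= Y w) -> expect p X <= expect p Y.
Proof. by move=> XY; apply: ler_sum => w _; rewrite ler_wpM2l. Qed.

Lemma expect_ge0 (X : Omega -> R) : (forall w, 0 <= X w) -> 0 <= expect p X.
Proof. by move=> X_ge0; apply: sumr_ge0 => w _; rewrite mulr_ge0. Qed.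

End Expectation.

Lemma expectZ (R : realType) (Omega : finType) (p X : Omega -> R) (k : R) :
  expect p (fun w => k * X w) = k * expect p X.
Proof. by rewrite /expect mulr_sumr; apply: eq_bigr => w _; rewrite mulrCA. Qed.

Theorem theorem4 (R : realType) (V : finType) (m : nat) (grp : V -> 'I_m)
  (alpha c : nat) (f : {set V} -> R) (OPT S22 : {set V})
  (Omega : finType) (p : Omega -> R) (A : Omega -> {set V})
  (X Y : Omega -> 'I_m -> {set V}) (eps : R) :
  (0 < m)%N -> (0 < c)%N ->
  nonneg_fun f -> submodular f ->
  is_optimal (feasibleP2 grp alpha c) f OPT ->
  (forall i : 'I_m, (1 < #|OPT :&: part grp i|)%N) ->
  let z := zOf grp OPT in
  is_optimal (feasibleP22 grp z alpha c) f S22 ->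
  is_distribution p ->
  (forall w, feasibleP22 grp z alpha c (A w)) ->
  expect p (fun w => f (A w)) >= (expR (-1) - eps) * f S22 ->
  (forall w, phase2_ok grp z (A w) (X w) (Y w)) ->
  expect p (fun w => f (Afinal grp f z (A w) (X w) (Y w)))
    >= (expR (-1) - eps) / 8 * f OPT.
Proof.
move=> m_gt0 _ f_ge0 f_sub OPT_opt OPT_gt1 z S22_opt [p_ge0 _] _ A_approx XY_ok.
set a := expR (-1) - eps in A_approx *.
set E := expect p _.
have OPT_le : f OPT <= 3 * f S22.
  exact: optP2_le_3_optP22 m_gt0 f_ge0 f_sub OPT_opt OPT_gt1 S22_opt.
have A_le : expect p (fun w => f (A w)) <= 2 * E.
  by rewrite -expectZ; apply: ler_expect => // w; apply: Afinal_ge_half.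
have E_ge0 : 0 <= E by apply: expect_ge0 => // w; apply: f_ge0.
have := f_ge0 OPT; have [a_ge0|a_lt0] := leP 0 a; nra.
Qed.
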